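(* Let $(p^*,q^*,\omega^*,\tilde\theta^*,\alpha^*,\lambda^*,\eta^*,\nu^* )$ be an optimal primal-dual solution of the planner's problem \[ \min_{p,q,\omega\in\mathbb{R}^n,\ \tilde\theta\in\mathbb{R}^{|\mathcal E|}}\ \sum_{j=1}^n J_j(p_j)+\tfrac12\omega^TD\omega \] subject to $q=p$ (multiplier $\alpha\in\mathbb{R}^n$), $\mathbf 1^T(q-d)=0$ (multiplier $\lambda\in\mathbb{R}$), $H^T(q-d)\le F$ (multiplier $\eta\in\mathbb{R}^{2|\mathcal E|}_{\ge0}$), and $q-d-D\omega-CB\tilde\theta=0$ (multiplier $\nu\in\mathbb{R}^n$). Then $q^*-d-D\omega^*-CB\tilde\theta^*=0$, $\omega^*=0$, $q^*$ is an optimal solution of $\min_q \sum_j J_j(q_j)$ s.t. $\mathbf 1^T(q-d)=0$, $H^T(q-d)\le F$, and $\nabla J(p^* )=\lambda^*\mathbf 1-H\eta^*$, where $\nabla J(p):=(J_j'(p_j))_{j=1}^n$.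
   Context: $(\mathcal N,\mathcal E)$ is a connected directed graph with $\mathcal N=\{1,\dots,n\}$; $C\in\mathbb{R}^{n\times|\mathcal E|}$ is its incidence matrix ($C_{j,e}=1$ if $e=(j,k)$, $-1$ if $e=(k,j)$, $0$ otherwise). $B$ ($|\mathcal E|\times|\mathcal E|$) and $D$ ($n\times n$) are diagonal with positive diagonal entries. $L:=CBC^T$, $L^\dagger$ its Moore–Penrose inverse, $H\in\mathbb{R}^{n\times2|\mathcal E|}$ with $H^T=\begin{bmatrix} BC^TL^\dagger\\ -BC^TL^\dagger\end{bmatrix}$, $F=\begin{bmatrix}\overline F\\-\underline F\end{bmatrix}$ for given limits $\underline F,\overline F$. $d\in\mathbb{R}^n$ is given; each $J_j$ is strictly convex and twice differentiable. The Lagrangian used to define the multipliers is $\sum_jJ_j(p_j)+\tfrac12\omega^TD\omega+\nu^T(q-d-D\omega-CB\tilde\theta)+\alpha^T(q-p)-\lambda\mathbf 1^T(q-d)+\eta^T(H^T(q-d)-F)$. *)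

From HB Require Import structures.
From mathcomp Require Import all_boot all_order all_algebra.
From mathcomp Require Import all_classical all_reals all_analysis.
Set Implicit Arguments. Unset Strict Implicit. Unset Printing Implicit Defensive.
Import Order.TTheory GRing.Theory Num.Theory.
Local Open Scope ring_scope.

Definition incidence (R : pzRingType) (n m : nat) (src tgt : 'I_m -> 'I_n)
  : 'M[R]_(n, m) :=
  \matrix_(j, e) (if src e == j then 1 else if tgt e == j then -1 else 0).

Definition weakly_connected (n m : nat) (src tgt : 'I_m -> 'I_n) : Prop :=
  forall i j : 'I_n,
    connect (fun a b => [exists e, ((src e == a) && (tgt e == b))
                                || ((src e == b) && (tgt e == a))]) i j.

Definition is_MP_inverse (R : pzRingType) (k : nat) (A X : 'M[R]_k) : Prop :=
  [/\ A *m X *m A = A, X *m A *m X = X,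
      (A *m X)^T = A *m X & (X *m A)^T = X *m A].

Definition strictly_convex (R : realType) (f : R -> R) : Prop :=
  forall x y t : R, x != y -> 0 < t < 1 ->
    f (t * x + (1 - t) * y) < t * f x + (1 - t) * f y.

Definition vle (R : realType) (k : nat) (u v : 'cV[R]_k) : Prop :=
  forall i, u i 0 <= v i 0.

Definition diagm (R : pzRingType) (k : nat) (b : 'I_k -> R) : 'M[R]_k :=
  diag_mx (\row_i b i).

Section Problem.
Variables (R : realType) (n m : nat).
Variables (J : 'I_n -> R -> R) (C : 'M[R]_(n, m)) (B : 'M[R]_m) (D : 'M[R]_n)
  (H : 'M[R]_(n, m + m)) (F : 'cV[R]_(m + m)) (d : 'cV[R]_n).

Definition ones : 'cV[R]_n := const_mx 1.

Definition sumJ (p : 'cV[R]_n) : R := \sum_j J j (p j 0).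

Definition planner_obj (p omega : 'cV[R]_n) : R :=
  sumJ p + 2^-1 * (omega^T *m D *m omega) 0 0.

Definition lagrangian (p q omega : 'cV[R]_n) (theta : 'cV[R]_m)
  (alpha : 'cV[R]_n) (lam : R) (eta : 'cV[R]_(m + m)) (nu : 'cV[R]_n) : R :=
  planner_obj p omega
  + (nu^T *m (q - d - D *m omega - C *m B *m theta)) 0 0
  + (alpha^T *m (q - p)) 0 0
  - lam * (ones^T *m (q - d)) 0 0
  + (eta^T *m (H^T *m (q - d) - F)) 0 0.

(* Optimal primal-dual solution = saddle point of the Lagrangian
   with eta >= 0 (zero duality gap, primal and dual optimal). *)
Definition primal_dual_optimal (p q omega : 'cV[R]_n) (theta : 'cV[R]_m)
  (alpha : 'cV[R]_n) (lam : R) (eta : 'cV[R]_(m + m)) (nu : 'cV[R]_n) : Prop :=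
  [/\ vle 0 eta,
      (forall alpha' lam' eta' nu', vle 0 eta' ->
         lagrangian p q omega theta alpha' lam' eta' nu'
         <= lagrangian p q omega theta alpha lam eta nu)
    & (forall p' q' omega' theta',
         lagrangian p q omega theta alpha lam eta nu
         <= lagrangian p' q' omega' theta' alpha lam eta nu)].

Definition reduced_feasible (q : 'cV[R]_n) : Prop :=
  (ones^T *m (q - d)) 0 0 = 0 /\ vle (H^T *m (q - d)) F.

Definition reduced_optimal (q : 'cV[R]_n) : Prop :=
  reduced_feasible q /\ forall q', reduced_feasible q' -> sumJ q <= sumJ q'.

End Problem.

From HB Require Import structures.
From mathcomp Require Import all_boot all_order all_algebra.
From mathcomp Require Import all_classical all_reals all_analysis.
From mathcomp Require Import ring lra.
Import Order.TTheory GRing.Theory Num.Theory.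
Local Open Scope ring_scope.

(* The saddle inequality in the dual variables gives primal feasibility and
   complementary slackness; in the primal variables it gives stationarity.
   Stationarity in theta says B C^T nu = 0, so nu is constant on the connected
   graph and hence orthogonal to the balanced vector q - d; stationarity in
   omega says omega = nu, and the network equation tested against nu then
   gives nu^T D nu = 0, so nu = omega = 0.  With nu = 0, stationarity in q
   reads alpha = lam 1 - H eta, and in p it reads J_j'(p_j) = alpha_j
   (Fermat). *)

Section VectorDot.
Context {R : realDomainType}.

Definition vdot {k} (u v : 'cV[R]_k) : R := (u^T *m v) 0 0.

Lemma vdotE {k} (u v : 'cV[R]_k) : vdot u v = \sum_i u i 0 * v i 0.
Proof. by rewrite /vdot mxE; apply: eq_bigr => i _; rewrite mxE. Qed.

Lemma vdotC {k} (u v : 'cV[R]_k) : vdot u v = vdot v u.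
Proof. by rewrite !vdotE; apply: eq_bigr => i _; rewrite mulrC. Qed.

Lemma vdotDr {k} (u v w : 'cV[R]_k) : vdot u (v + w) = vdot u v + vdot u w.
Proof. by rewrite /vdot mulmxDr mxE. Qed.

Lemma vdotNr {k} (u v : 'cV[R]_k) : vdot u (- v) = - vdot u v.
Proof. by rewrite /vdot mulmxN mxE. Qed.

Lemma vdotBr {k} (u v w : 'cV[R]_k) : vdot u (v - w) = vdot u v - vdot u w.
Proof. by rewrite vdotDr vdotNr. Qed.

Lemma vdotZr {k} a (u v : 'cV[R]_k) : vdot u (a *: v) = a * vdot u v.
Proof. by rewrite /vdot -scalemxAr mxE. Qed.

Lemma vdotDl {k} (u v w : 'cV[R]_k) : vdot (u + v) w = vdot u w + vdot v w.
Proof. by rewrite vdotC vdotDr -!(vdotC w). Qed.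

Lemma vdotNl {k} (u v : 'cV[R]_k) : vdot (- u) v = - vdot u v.
Proof. by rewrite vdotC vdotNr vdotC. Qed.

Lemma vdotBl {k} (u v w : 'cV[R]_k) : vdot (u - v) w = vdot u w - vdot v w.
Proof. by rewrite vdotDl vdotNl. Qed.

Lemma vdotZl {k} a (u v : 'cV[R]_k) : vdot (a *: u) v = a * vdot u v.
Proof. by rewrite vdotC vdotZr vdotC. Qed.

Lemma vdot0l {k} (v : 'cV[R]_k) : vdot 0 v = 0.
Proof. by rewrite /vdot trmx0 mul0mx mxE. Qed.

Lemma vdot0r {k} (v : 'cV[R]_k) : vdot v 0 = 0.
Proof. by rewrite vdotC vdot0l. Qed.

Lemma vdot_trmx {k l} (u : 'cV[R]_k) (A : 'M[R]_(k, l)) v :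
  vdot u (A *m v) = vdot (A^T *m u) v.
Proof. by rewrite /vdot trmx_mul trmxK mulmxA. Qed.

Lemma vdot_delta {k} (i : 'I_k) (v : 'cV[R]_k) : vdot (delta_mx i 0) v = v i 0.
Proof.
rewrite vdotE (bigD1 i) //= big1 ?addr0 => [|j /negPf neq_ji].
  by rewrite mxE !eqxx mul1r.
by rewrite mxE neq_ji mul0r.
Qed.

Lemma vdot_self_le0 {k} (u : 'cV[R]_k) : vdot u u <= 0 -> u = 0.
Proof.
have sq_ge0 i : true -> 0 <= u i 0 * u i 0 by rewrite -expr2 sqr_ge0.
rewrite vdotE => le0; have /(psumr_eq0P sq_ge0) u0 : \sum_i u i 0 * u i 0 = 0.
  by apply/eqP; rewrite eq_le le0 sumr_ge0.
apply/matrixP => i j; rewrite ord1 mxE; apply/eqP.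
by have /eqP := u0 i isT; rewrite mulf_eq0 orbb.
Qed.

Lemma vdot_maximal_eq0 {k} (u g : 'cV[R]_k) :
  (forall v, vdot v g <= vdot u g) -> g = 0.
Proof.
by move=> /(_ (u + g)); rewrite vdotDl -lerBrDl subrr; exact: vdot_self_le0.
Qed.

Lemma vdot_minimal_eq0 {k} (u g : 'cV[R]_k) :
  (forall v, vdot u g <= vdot v g) -> g = 0.
Proof.
move=> u_min; apply/eqP; rewrite -oppr_eq0; apply/eqP.
by apply: (vdot_maximal_eq0 u) => v; rewrite !vdotNr lerN2.
Qed.

Lemma vdot_const_orthogonal {k} (u v : 'cV[R]_k) :
  (forall i j, u i 0 = u j 0) -> vdot (const_mx 1) v = 0 -> vdot u v = 0.
Proof.
move=> u_const v_bal; case: (pickP (fun _ : 'I_k => true)) => [i0 _ | k0]; last first.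
  by rewrite vdotE big1 // => i _; have := k0 i.
have sum_v : \sum_i v i 0 = vdot (const_mx 1) v.
  by rewrite vdotE; apply: eq_bigr => i _; rewrite mxE mul1r.
transitivity (u i0 0 * \sum_i v i 0); last by rewrite sum_v v_bal mulr0.
by rewrite vdotE mulr_sumr; apply: eq_bigr => i _; rewrite (u_const i i0).
Qed.

End VectorDot.

Section NonnegativeCone.
Context {R : realType}.

Lemma vle_subl0 {k} (u v : 'cV[R]_k) : vle (u - v) 0 <-> vle u v.
Proof. by split=> uv i; move: (uv i); rewrite !mxE subr_le0. Qed.

Lemma vdot_le0 {k} {u v : 'cV[R]_k} : vle 0 u -> vle v 0 -> vdot u v <= 0.
Proof.
move=> u_ge0 v_le0; rewrite vdotE sumr_le0 // => i _.
by apply: mulr_ge0_le0; [move: (u_ge0 i) | move: (v_le0 i)]; rewrite mxE.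
Qed.

Lemma vdot_cone_maximal {k} {u g : 'cV[R]_k} : vle 0 u ->
  (forall v, vle 0 v -> vdot v g <= vdot u g) -> vle g 0 /\ vdot u g = 0.
Proof.
move=> u_ge0 u_max.
have g_le0 : vle g 0.
  move=> i; rewrite mxE.
  have := u_max (u + delta_mx i 0); rewrite vdotDl vdot_delta -lerBrDl subrr.
  apply=> j; move: (u_ge0 j); rewrite !mxE => uj_ge0.
  by rewrite addr_ge0 // ler0n.
split=> //; apply/eqP; rewrite eq_le vdot_le0 //=.
by have := u_max 0 (fun i => lexx _); rewrite vdot0l.
Qed.

End NonnegativeCone.

Section DiagonalMatrix.
Context {R : realDomainType} {k : nat} {a : 'I_k -> R}.
Hypothesis a_gt0 : forall i, 0 < a i.

Lemma trmx_diagm : (diagm a)^T = diagm a.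
Proof. exact: tr_diag_mx. Qed.

Lemma diagm_mul_eq0 (u : 'cV[R]_k) : diagm a *m u = 0 -> u = 0.
Proof.
move=> /matrixP au0; apply/matrixP => i j; rewrite ord1.
have /eqP := au0 i 0; rewrite mul_diag_mx !mxE mulf_eq0 (gt_eqF (a_gt0 i)).
by move/eqP.
Qed.

Lemma diagm_posdef (u : 'cV[R]_k) : vdot u (diagm a *m u) <= 0 -> u = 0.
Proof.
have ->: vdot u (diagm a *m u) = \sum_i a i * (u i 0 * u i 0).
  by rewrite vdotE; apply: eq_bigr => i _; rewrite mul_diag_mx !mxE mulrCA.
have term_ge0 i : true -> 0 <= a i * (u i 0 * u i 0).
  by move=> _; apply: mulr_ge0; [exact: ltW | rewrite -expr2 sqr_ge0].
move=> le0; have /(psumr_eq0P term_ge0) u0 : \sum_i a i * (u i 0 * u i 0) = 0.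
  by apply/eqP; rewrite eq_le le0 sumr_ge0.
apply/matrixP => i j; rewrite ord1 mxE; apply/eqP.
by have /eqP := u0 i isT; rewrite mulf_eq0 (gt_eqF (a_gt0 i)) mulf_eq0 orbb.
Qed.

End DiagonalMatrix.

Section IncidenceMatrix.
Context {R : realDomainType} {n m : nat} {src tgt : 'I_m -> 'I_n}.
Hypothesis no_loop : forall e, src e != tgt e.

Lemma incidence_trmx_mul (v : 'cV[R]_n) e :
  ((incidence R src tgt)^T *m v) e 0 = v (src e) 0 - v (tgt e) 0.
Proof.
have st := no_loop e; rewrite mxE (bigD1 (src e)) //= (bigD1 (tgt e)) 1?eq_sym //=.
rewrite big1 => [|i /andP[/negPf neq_is /negPf neq_it]].
  by rewrite !mxE eqxx (negPf st) eqxx mul1r mulN1r addr0.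
by rewrite !mxE eq_sym neq_is eq_sym neq_it mul0r.
Qed.

Lemma incidence_trmx_kernel_const (v : 'cV[R]_n) :
  weakly_connected src tgt -> (incidence R src tgt)^T *m v = 0 ->
  forall i j, v i 0 = v j 0.
Proof.
move=> connected Cv0 i j.
have edge_eq e : v (src e) 0 = v (tgt e) 0.
  by apply/eqP; rewrite -subr_eq0 -incidence_trmx_mul Cv0 mxE.
have level_closed : fingraph.closed (fun a b => [exists e,
    ((src e == a) && (tgt e == b)) || ((src e == b) && (tgt e == a))])
    [pred l | v l 0 == v i 0].
  move=> a b /existsP[e /orP[] /andP[/eqP <- /eqP <-]];
    by rewrite !inE edge_eq.
have := closed_connect level_closed (connected i j).
by rewrite !inE eqxx => /esym/eqP.
Qed.

End IncidenceMatrix.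

Lemma derive1_eq_of_linear_min {R : realType} {f : R -> R} {a c : R} :
  (forall x, derivable f x 1) ->
  (forall y, f c - a * c <= f y - a * y) -> derive1 f c = a.
Proof.
move=> df cmin.
have dlin x : derivable (fun y : R => a * y) x 1.
  by apply: derivableZ; exact: derivable_id.
have min0 : is_derive c 1 (fun y => f y - a * y) 0.
  apply: (@derive1_at_min _ _ (c - 1) (c + 1)) => //; first lra.
  - by move=> t _; apply: derivableB.
  - by rewrite in_itv /=; apply/andP; split; lra.
have : derive (fun y => f y - a * y) c 1 = 0 by exact: derive_val.
rewrite deriveB // deriveZ ?derive_id ?derive1E; last exact: derivable_id.
by move/eqP; rewrite subr_eq0 => /eqP ->; exact: mulr1.
Qed.

Lemma sumJ_linear_min_coord {R : realType} {n} {J : 'I_n -> R -> R} {a p : 'cV[R]_n} :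
  (forall p', sumJ J p - vdot a p <= sumJ J p' - vdot a p') ->
  forall j y, J j (p j 0) - a j 0 * p j 0 <= J j y - a j 0 * y.
Proof.
move=> p_min j y; pose p' := p + (y - p j 0) *: delta_mx j 0.
have sumJ_p' : sumJ J p' = sumJ J p - J j (p j 0) + J j y.
  have others : \sum_(i | i != j) J i (p' i 0) = \sum_(i | i != j) J i (p i 0).
    by apply: eq_bigr => i /negPf neq_ij; rewrite !mxE neq_ij mulr0 addr0.
  rewrite /sumJ (bigD1 j) //= [in RHS](bigD1 j) //= others.
  rewrite !mxE !eqxx mulr1 [p j 0 + _]addrC subrK; lra.
have := p_min p'; rewrite sumJ_p' vdotDr vdotZr (vdotC a (delta_mx j 0)) vdot_delta; lra.
Qed.

Section SaddlePoint.
Context {R : realType} {n m : nat}.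
Context {J : 'I_n -> R -> R} {C : 'M[R]_(n, m)} {B : 'M[R]_m} {D : 'M[R]_n}.
Context {H : 'M[R]_(n, m + m)} {F : 'cV[R]_(m + m)} {d : 'cV[R]_n}.

Local Notation L := (lagrangian J C B D H F d).

Lemma lagrangianE p q omega theta alpha lam eta nu :
  L p q omega theta alpha lam eta nu =
  sumJ J p + 2^-1 * vdot omega (D *m omega)
  + vdot nu (q - d - D *m omega - C *m B *m theta) + vdot alpha (q - p)
  - lam * vdot (ones R n) (q - d) + vdot eta (H^T *m (q - d) - F).
Proof. by rewrite /lagrangian /planner_obj -mulmxA. Qed.

Lemma lagrangian_separable p q omega theta alpha lam eta nu :
  L p q omega theta alpha lam eta nu =
  (sumJ J p - vdot alpha p)
  + (2^-1 * vdot omega (D *m omega) - vdot nu (D *m omega))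
  - vdot ((C *m B)^T *m nu) theta
  + vdot (alpha + nu - lam *: ones R n + H *m eta) q
  - vdot (nu - lam *: ones R n + H *m eta) d - vdot eta F.
Proof.
rewrite lagrangianE [vdot eta _]vdotBr [vdot nu _]vdotBr.
rewrite (vdot_trmx eta) trmxK (vdot_trmx nu (C *m B)).
rewrite !vdotBr !vdotDl !vdotNl !vdotZl; lra.
Qed.

Context {p q omega : 'cV[R]_n} {theta : 'cV[R]_m}.
Context {alpha : 'cV[R]_n} {lam : R} {eta : 'cV[R]_(m + m)} {nu : 'cV[R]_n}.
Hypothesis saddle : primal_dual_optimal J C B D H F d p q omega theta alpha lam eta nu.

Let eta_ge0 : vle 0 eta. Proof. by case: saddle. Qed.

Let dual_max alpha' lam' eta' nu' : vle 0 eta' ->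
  L p q omega theta alpha' lam' eta' nu' <= L p q omega theta alpha lam eta nu.
Proof. by case: saddle => _ + _; apply. Qed.

Let primal_min p' q' omega' theta' :
  L p q omega theta alpha lam eta nu <= L p' q' omega' theta' alpha lam eta nu.
Proof. by case: saddle. Qed.

Lemma saddle_residual : q - d - D *m omega - C *m B *m theta = 0.
Proof.
apply: (vdot_maximal_eq0 nu) => nu'.
by have := dual_max alpha lam eta nu' eta_ge0; rewrite !lagrangianE; lra.
Qed.

Lemma saddle_q_eq_p : q = p.
Proof.
apply/eqP; rewrite -subr_eq0; apply/eqP; apply: (vdot_maximal_eq0 alpha) => alpha'.
by have := dual_max alpha' lam eta nu eta_ge0; rewrite !lagrangianE; lra.
Qed.

Lemma saddle_balance : vdot (ones R n) (q - d) = 0.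
Proof.
set s := vdot _ _; have := dual_max alpha (lam - s) eta nu eta_ge0.
rewrite !lagrangianE -/s => dual_ineq; have : s ^+ 2 <= 0 by rewrite expr2; lra.
by move=> s2_le0; apply/eqP; rewrite -sqrf_eq0 eq_le s2_le0 sqr_ge0.
Qed.

Lemma saddle_limits_compl_slack :
  vle (H^T *m (q - d) - F) 0 /\ vdot eta (H^T *m (q - d) - F) = 0.
Proof.
apply: vdot_cone_maximal eta_ge0 _ => eta' eta'_ge0.
by have := dual_max alpha lam eta' nu eta'_ge0; rewrite !lagrangianE; lra.
Qed.

Lemma saddle_theta_stationary : (C *m B)^T *m nu = 0.
Proof.
apply: (vdot_maximal_eq0 theta) => theta'; rewrite !(vdotC theta' _) (vdotC theta).
by have := primal_min p q omega theta'; rewrite !lagrangian_separable; lra.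
Qed.

Lemma saddle_q_stationary : alpha + nu = lam *: ones R n - H *m eta.
Proof.
apply/eqP; rewrite -subr_eq0 opprD opprK addrA; apply/eqP.
apply: (vdot_minimal_eq0 q) => q'; rewrite !(vdotC _ (_ + H *m eta)).
by have := primal_min p q' omega theta; rewrite !lagrangian_separable; lra.
Qed.

Lemma saddle_p_min p' : sumJ J p - vdot alpha p <= sumJ J p' - vdot alpha p'.
Proof. by have := primal_min p' q omega theta; rewrite !lagrangian_separable; lra. Qed.

Section PositiveDefiniteD.
Hypothesis D_sym : D^T = D.
Hypothesis D_posdef : forall u, vdot u (D *m u) <= 0 -> u = 0.

(* [w^T D w / 2 - nu^T D w] exceeds its value at [nu] by [(w - nu)^T D (w - nu) / 2]. *)
Lemma saddle_omega_eq_nu : omega = nu.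
Proof.
have D_swap u v : vdot u (D *m v) = vdot v (D *m u).
  by rewrite vdot_trmx D_sym vdotC.
apply/eqP; rewrite -subr_eq0; apply/eqP; apply: D_posdef.
have := primal_min p q nu theta; rewrite !lagrangian_separable.
rewrite mulmxBr !vdotBl !vdotBr (D_swap omega nu); lra.
Qed.

Lemma saddle_nu_eq0 : vdot nu (q - d) = 0 -> nu = 0.
Proof.
move=> nu_orth; apply: D_posdef.
have := congr1 (vdot nu) saddle_residual.
rewrite vdot0r [vdot nu _]vdotBr (vdot_trmx nu (C *m B)) saddle_theta_stationary.
rewrite vdot0l vdotBr nu_orth saddle_omega_eq_nu; lra.
Qed.

End PositiveDefiniteD.

Lemma saddle_reduced_optimal : omega = 0 -> nu = 0 -> reduced_optimal J H F d q.
Proof.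
have [limits compl_slack] := saddle_limits_compl_slack.
move=> omega0 nu0; split; first by split; [exact: saddle_balance | exact/vle_subl0].
move=> q' [balance' /vle_subl0 limits'].
have {}balance' : vdot (ones R n) (q' - d) = 0 := balance'.
have := primal_min q' q' 0 0; rewrite !lagrangianE.
rewrite saddle_residual compl_slack saddle_balance saddle_q_eq_p balance' omega0 nu0.
rewrite !subrr !vdot0l !vdot0r.
have := vdot_le0 eta_ge0 limits'; lra.
Qed.

End SaddlePoint.

Theorem corollary1 (R : realType) (n m : nat) (src tgt : 'I_m -> 'I_n)
  (b : 'I_m -> R) (dD : 'I_n -> R) (J : 'I_n -> R -> R) (Ldag : 'M[R]_n)
  (Fup Flo : 'cV[R]_m) (d : 'cV[R]_n)
  (p q omega : 'cV[R]_n) (theta : 'cV[R]_m) (alpha : 'cV[R]_n) (lam : R)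
  (eta : 'cV[R]_(m + m)) (nu : 'cV[R]_n) :
  (forall e, src e != tgt e) ->
  injective (fun e => (src e, tgt e)) ->
  weakly_connected src tgt ->
  (forall e, 0 < b e) ->
  (forall j, 0 < dD j) ->
  (forall j, strictly_convex (J j)) ->
  (forall j x, derivable (J j) x 1) ->
  (forall j x, derivable (derive1 (J j)) x 1) ->
  let C : 'M[R]_(n, m) := @incidence R n m src tgt in
  let B := diagm b in
  let D := diagm dD in
  is_MP_inverse (C *m B *m C^T) Ldag ->
  let X : 'M[R]_(m, n) := B *m C^T *m Ldag in
  let H : 'M[R]_(n, m + m) := (col_mx X (- X))^T in
  let F : 'cV[R]_(m + m) := col_mx Fup (- Flo) in
  primal_dual_optimal J C B D H F d p q omega theta alpha lam eta nu ->
  [/\ q - d - D *m omega - C *m B *m theta = 0,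
      omega = 0,
      reduced_optimal J H F d q
    & forall j, derive1 (J j) (p j 0) = lam - (H *m eta) j 0].
Proof.
move=> no_loop _ connected b_gt0 dD_gt0 _ J_derivable _ C B D _ X H F saddle.
have D_sym : D^T = D := trmx_diagm.
have D_posdef := diagm_posdef dD_gt0.
have nu_const : forall i j, nu i 0 = nu j 0.
  apply: (incidence_trmx_kernel_const no_loop nu connected).
  apply: (diagm_mul_eq0 b_gt0); rewrite mulmxA -[diagm b]trmx_diagm -trmx_mul.
  exact: saddle_theta_stationary saddle.
have nu0 : nu = 0.
  apply: (saddle_nu_eq0 saddle D_sym D_posdef).
  exact: vdot_const_orthogonal nu_const (saddle_balance saddle).
have omega0 : omega = 0 by rewrite (saddle_omega_eq_nu saddle D_sym D_posdef).
split=> //; first exact: saddle_residual saddle.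
  exact: saddle_reduced_optimal saddle omega0 nu0.
move=> j; have p_min := sumJ_linear_min_coord (saddle_p_min saddle) j.
rewrite (derive1_eq_of_linear_min (J_derivable j) p_min).
by have := saddle_q_stationary saddle; rewrite nu0 addr0 => ->; rewrite !mxE mulr1.
Qed.
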